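(* Every outerplanar graph $G$ satisfies $G \in B_2^m$, i.e. $G$ has a $B_2^m$-EPG representation.
   Context: Consider a rectangular grid of horizontal and vertical grid lines; a grid edge is the segment of a grid line between two consecutive grid points. A path on the grid is a sequence of grid points in which consecutive points are joined by grid edges; a bend point is an interior point of the path at which a horizontal grid edge meets a vertical grid edge of the path. Two paths intersect if they share at least one grid edge. An EPG representation of a graph $G$ is a set of paths on a grid, one per vertex, such that two vertices are adjacent in $G$ iff their paths share a grid edge. A $B_k$-EPG representation is an EPG representation in which every path has at most $k$ bends; a path is monotonic if it is ascending in both columns and rows (traversed from one end it only moves rightwards and upwards), and a $B_k^m$-EPG representation is a $B_k$-EPG representation in which every path is monotonic. $B_k$ (resp. $B_k^m$) denotes the class of graphs having a $B_k$-EPG (resp. $B_k^m$-EPG) representation. *)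

From mathcomp Require Import all_boot.
Set Implicit Arguments. Unset Strict Implicit. Unset Printing Implicit Defensive.

(** Grid points: (column, row) with natural coordinates (any finite family of
    grid paths fits in a rectangular grid, and can be translated to N x N). *)
Definition gpoint := (nat * nat)%type.

Definition grid_adj (p q : gpoint) : bool :=
  ((p.1 == q.1) && ((p.2.+1 == q.2) || (q.2.+1 == p.2))) ||
  ((p.2 == q.2) && ((p.1.+1 == q.1) || (q.1.+1 == p.1))).

Definition path_edges (s : seq gpoint) : seq (gpoint * gpoint) := zip s (behead s).

Definition grid_path (s : seq gpoint) : bool :=
  (1 < size s) && all (fun pq => grid_adj pq.1 pq.2) (path_edges s).

Definition share_edge (s t : seq gpoint) : bool :=
  has (fun pq => has (fun rs => (pq == rs) || (pq == (rs.2, rs.1))) (path_edges t))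
      (path_edges s).

Definition horiz (pq : gpoint * gpoint) : bool := pq.1.2 == pq.2.2.

(** Number of bend points: interior points where a horizontal and a vertical
    edge of the path meet (one per pair of consecutive edges of different
    orientation). *)
Definition bends (s : seq gpoint) : nat :=
  let E := path_edges s in
  count (fun ab => horiz ab.1 != horiz ab.2) (zip E (behead E)).

Definition ascending (s : seq gpoint) : bool :=
  sorted leq (map fst s) && sorted leq (map snd s).

Definition monotonic (s : seq gpoint) : bool := ascending s || ascending (rev s).

Definition EPG_rep (T : finType) (e : rel T) (P : T -> seq gpoint) : Prop :=
  (forall v, grid_path (P v)) /\
  (forall u v, u != v -> (e u v <-> share_edge (P u) (P v))).

Definition in_Bkm (k : nat) (T : finType) (e : rel T) : Prop :=
  exists P : T -> seq gpoint,
    EPG_rep e P /\ (forall v, bends (P v) <= k) /\ (forall v, monotonic (P v)).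

(** Outerplanar: the graph has a drawing with all vertices on a circle and
    edges as pairwise non-crossing chords inside it; i.e. there is a (linear,
    cut-open cyclic) injective placement of the vertices such that no two edges
    have strictly interleaving endpoints. *)
Definition outerplanar (T : finType) (e : rel T) : Prop :=
  exists pos : T -> nat, injective pos /\
    forall a b c d, e a b -> e c d ->
      ~ [/\ pos a < pos c, pos c < pos b & pos b < pos d].

(* A non-crossing edge [ab] with
   [pos a < pos b] is the leftmost edge of [b] or the rightmost edge of [a], and
   [x |-> lnb x] (the leftmost left neighbour) is a forest, whose vertices we colour
   by depth parity.  Vertex [x] owns the lane [pos x + 1], a column or a row
   according to its colour, and its path is a two-bend staircase made of a piece of
   its own lane, where its children meet it, a piece of the lane of its parent,
   where it meets the parent and adjacent siblings, and, when its rightmost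
   neighbour [v] is neither a child nor a sibling, a single edge of the lane of
   [v].  Non-crossing is exactly what keeps all other pieces apart. *)

From mathcomp Require Import all_boot zify.
Set Implicit Arguments. Unset Strict Implicit. Unset Printing Implicit Defensive.

Lemma path_edges_map_iota (f : nat -> gpoint) m n :
  path_edges [seq f i | i <- iota m n.+1] = [seq (f i, f i.+1) | i <- iota m n].
Proof. by elim: n m => [|n IHn] m //; rewrite /path_edges in IHn *; rewrite /= -IHn. Qed.

Lemma iota_shift m n : iota m n = [seq m + j | j <- iota 0 n].
Proof. by rewrite -iotaDl addn0. Qed.

Definition changes (A : Type) (f : A -> bool) (s : seq A) : nat :=
  count (fun ab => f ab.1 != f ab.2) (zip s (behead s)).

Lemma changes_cat (A : Type) (f : A -> bool) (s t : seq A) :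
  changes f (s ++ t) <= changes f s + changes f t + 1.
Proof.
rewrite /changes; elim: s => [|x s IHs] /=; first by rewrite addn1.
case: s IHs => [|y s] IHs /=.
  by case: t {IHs} => //= z t; rewrite add0n addnC leq_add2l leq_b1.
by rewrite -!addnA leq_add2l addnA.
Qed.

Lemma changes_map_const (A B : Type) (f : B -> bool) (g : A -> B) (s : seq A) b :
  (forall x, f (g x) = b) -> changes f (map g s) = 0.
Proof.
rewrite /changes => fgb; elim: s => [|x [|y s] IHs] //=.
by rewrite !fgb eqxx -IHs.
Qed.

(** * Staircases *)

Definition unit_edge (h : bool) (u w : nat) : gpoint * gpoint :=
  if h then ((u, w), (u.+1, w)) else ((w, u), (w, u.+1)).

Lemma horiz_unit_edge h u w : horiz (unit_edge h u w) = h.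
Proof. by case: h; rewrite /horiz /= ?eqxx //; lia. Qed.

(* Legs of lengths [a], [b], [c] from [(x, y)], the first one horizontal if [h];
   for [~~ h] the two coordinates are swapped. *)
Definition stair (h : bool) (x y a b c : nat) : seq gpoint :=
  mkseq (fun i => let u := x + minn i a + (i - (a + b)) in
                  let w := y + minn (i - a) b in
                  if h then (u, w) else (w, u)) (a + b + c).+1.

Lemma path_edges_stair h x y a b c :
  path_edges (stair h x y a b c) =
  [seq unit_edge h (x + j) y | j <- iota 0 a] ++
  [seq unit_edge (~~ h) (y + j) (x + a) | j <- iota 0 b] ++
  [seq unit_edge h (x + a + j) (y + b) | j <- iota 0 c].
Proof.
rewrite /stair /mkseq path_edges_map_iota -addnA !iotaD add0n.
rewrite (iota_shift a) (iota_shift (a + b)) !map_cat -!map_comp.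
congr (_ ++ _ ++ _); apply/eq_in_map => j; rewrite mem_iota /= => j_lt;
  case: h; rewrite /unit_edge /=; congr (_, _); congr (_, _); lia.
Qed.

Lemma stair_bends h x y a b c : bends (stair h x y a b c) <= 2.
Proof.
rewrite -[bends _]/(changes horiz _) path_edges_stair.
apply: leq_trans (changes_cat _ _ _) _; rewrite addn1 ltnS.
apply: leq_trans (leq_add (leqnn _) (changes_cat _ _ _)) _.
by rewrite !(changes_map_const _ (fun j => horiz_unit_edge _ _ _)).
Qed.

Lemma stair_grid_path h x y a b c : 0 < a + b + c -> grid_path (stair h x y a b c).
Proof.
move=> abc_gt0; rewrite /grid_path size_mkseq ltnS abc_gt0 path_edges_stair.
have adj_unit_edge h' u w : grid_adj (unit_edge h' u w).1 (unit_edge h' u w).2.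
  by case: h'; rewrite /grid_adj /= !eqxx ?orbT.
by rewrite !all_cat !all_map; apply/and4P; split => //; apply/allP => j _ /=.
Qed.

Lemma stair_ascending h x y a b c : ascending (stair h x y a b c).
Proof.
rewrite /ascending /stair /mkseq -!map_comp.
by apply/andP; split; apply: homo_sorted (iota_sorted 0 _) => i j ij /=;
  case: h => /=; lia.
Qed.

(** * Lanes and zigzags *)

Record slot := Slot { sorient : bool; slane : nat; skey : nat }.

Definition in_seg (o : bool) (l lo hi : nat) (s : slot) : bool :=
  [&& sorient s == o, slane s == l, lo <= skey s & skey s < hi].

Record zigzag := Zigzag
  { zorient : bool; lane1 : nat; lane2 : nat; lane3 : nat; key_lo : nat; key_hi : nat }.

Definition zslots (z : zigzag) (s : slot) : bool :=
  [|| in_seg (zorient z) (lane1 z) (key_lo z) (lane2 z) s,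
      in_seg (~~ zorient z) (lane2 z) (lane3 z) (lane1 z) s
    | in_seg (zorient z) (lane3 z) (lane2 z) (key_hi z) s].

Section Zigzag.

Variable M : nat.

(* Slot [s] is a unit edge of lane [slane s]: the row [l] if [sorient s], else the
   column [M - l].  Keys grow upwards along a column and leftwards along a row, so
   the column of lane [l] and the row of lane [m] cross between keys [m - 1] and
   [m] of the former and keys [l - 1] and [l] of the latter. *)
Definition slot_edge (s : slot) : gpoint * gpoint :=
  if sorient s then unit_edge true (M - (skey s).+1) (slane s)
  else unit_edge false (skey s) (M - slane s).

Definition slot_in_box (s : slot) : bool := (slane s <= M) && (skey s < M).

Definition zigzag_wf (z : zigzag) : bool :=
  [&& lane3 z <= lane1 z <= M, key_lo z <= lane2 z <= key_hi z,
      key_lo z < key_hi z & key_hi z <= M].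

Definition zpath (z : zigzag) : seq gpoint :=
  let: Zigzag o l1 l2 l3 k0 k3 := z in
  if o then stair true (M - k3) l3 (k3 - l2) (l1 - l3) (l2 - k0)
  else stair false k0 (M - l1) (l2 - k0) (l1 - l3) (k3 - l2).

Local Ltac pair_lia := repeat congr (_, _); lia.

Lemma mem_zpath z pq : zigzag_wf z ->
  pq \in path_edges (zpath z) <-> exists2 s, zslots z s & pq = slot_edge s.
Proof.
case: z => o l1 l2 l3 k0 k3; rewrite /zigzag_wf /= => /and4P[/andP[l31 l1M] /andP[k02 l2k3] _ k3M].
rewrite /zpath /zslots /in_seg /slot_edge /=.
case: o; rewrite path_edges_stair !mem_cat /=; split.
- case/or3P => /mapP [j]; rewrite mem_iota => /andP[_ jlt] ->.
  + by exists (Slot true l3 (k3 - j.+1)); rewrite /= ?eqxx; [lia | pair_lia].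
  + by exists (Slot false l2 (l3 + j)); rewrite /= ?eqxx; [lia | pair_lia].
  + by exists (Slot true l1 (l2 - j.+1)); rewrite /= ?eqxx; [lia | pair_lia].
- move=> [[o l k] + ->]; case: o => /or3P[] /and4P[] //= _ /eqP-> lo hi; apply/or3P.
  + by constructor 3; apply/mapP; exists (l2 - k.+1); rewrite ?mem_iota; [lia | pair_lia].
  + by constructor 1; apply/mapP; exists (k3 - k.+1); rewrite ?mem_iota; [lia | pair_lia].
  + by constructor 2; apply/mapP; exists (k - l3); rewrite ?mem_iota; [lia | pair_lia].
- case/or3P => /mapP [j]; rewrite mem_iota => /andP[_ jlt] ->.
  + by exists (Slot false l1 (k0 + j)); rewrite /= ?eqxx; [lia | pair_lia].
  + by exists (Slot true l2 (l1 - j.+1)); rewrite /= ?eqxx; [lia | pair_lia].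
  + by exists (Slot false l3 (l2 + j)); rewrite /= ?eqxx; [lia | pair_lia].
- move=> [[o l k] + ->]; case: o => /or3P[] /and4P[] //= _ /eqP-> lo hi; apply/or3P.
  + by constructor 2; apply/mapP; exists (l1 - k.+1); rewrite ?mem_iota; [lia | pair_lia].
  + by constructor 1; apply/mapP; exists (k - k0); rewrite ?mem_iota; [lia | pair_lia].
  + by constructor 3; apply/mapP; exists (k - l2); rewrite ?mem_iota; [lia | pair_lia].
Qed.

Lemma zslots_in_box z s : zigzag_wf z -> zslots z s -> slot_in_box s.
Proof.
case: z s => o l1 l2 l3 k0 k3 [o' l k]; rewrite /slot_in_box /zigzag_wf /zslots /in_seg /=.
by case: o o' => -[] /=; lia.
Qed.

Lemma slot_edge_inj s s' : slot_in_box s -> slot_in_box s' -> slot_edge s = slot_edge s' -> s = s'.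
Proof.
case: s s' => [[] l k] [[] l' k']; rewrite /slot_in_box /slot_edge /= => ok ok' [] *;
  congr Slot; lia.
Qed.

Lemma slot_edge_not_rev s s' : slot_edge s <> ((slot_edge s').2, (slot_edge s').1).
Proof. by case: s s' => [[] l k] [[] l' k'] [] /=; lia. Qed.

Lemma share_edge_zpath z z' : zigzag_wf z -> zigzag_wf z' ->
  share_edge (zpath z) (zpath z') <-> exists s, zslots z s && zslots z' s.
Proof.
move=> wf wf'; split.
  case/hasP => pq /(mem_zpath _ wf) [s zs ->] /hasP [rs /(mem_zpath _ wf') [s' zs' ->]].
  case/orP=> /eqP; last by move/slot_edge_not_rev.
  move/(slot_edge_inj (zslots_in_box wf zs) (zslots_in_box wf' zs')) => ss'.
  by exists s; rewrite zs ss'.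
case=> s /andP[zs zs']; apply/hasP; exists (slot_edge s); first by apply/mem_zpath => //; exists s.
by apply/hasP; exists (slot_edge s); [apply/mem_zpath => //; exists s | rewrite eqxx].
Qed.

Lemma zpath_grid_path z : zigzag_wf z -> grid_path (zpath z).
Proof.
case: z => o l1 l2 l3 k0 k3; rewrite /zigzag_wf /= => wf.
by case: o; apply: stair_grid_path; lia.
Qed.

Lemma zpath_bends z : bends (zpath z) <= 2.
Proof. by case: z => [[]] *; apply: stair_bends. Qed.

Lemma zpath_monotonic z : monotonic (zpath z).
Proof. by case: z => [[]] *; rewrite /monotonic stair_ascending. Qed.

End Zigzag.

(** * Outerplanar graphs *)

Section Outerplanar.

Variables (T : finType) (e : rel T) (pos : T -> nat).
Hypotheses (e_sym : symmetric e) (pos_inj : injective pos).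
Hypothesis no_cross : forall a b c d, e a b -> e c d ->
  ~ [/\ pos a < pos c, pos c < pos b & pos b < pos d].

Let edge_sym x y : e x y -> e y x. Proof. by rewrite e_sym. Qed.

Lemma neq_pos_lt u w : u != w -> (pos u < pos w) || (pos w < pos u).
Proof. by rewrite -(inj_eq pos_inj) neq_ltn. Qed.

Definition leftmost (f : T -> nat) (x : T) : option T :=
  [pick y | e x y && (f y < f x) & [forall z, e x z && (f z < f x) ==> (f y <= f z)]].

Variant leftmost_spec (f : T -> nat) (x : T) : option T -> Prop :=
  | LeftmostSome p of e x p & f p < f x & (forall z, e x z -> f z < f x -> f p <= f z) :
      leftmost_spec f x (Some p)
  | LeftmostNone of (forall z, e x z -> f x <= f z) : leftmost_spec f x None.

Lemma leftmostP f x : leftmost_spec f x (leftmost f x).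
Proof.
rewrite /leftmost; case: pickP => [p /andP[/andP[xp px] /forallP pmin] | none].
  by constructor => // z xz zx; move/implyP: (pmin z); apply; rewrite xz.
constructor => z xz; rewrite leqNgt; apply/negP => zx.
have [|p /andP[xp px] pmin] := @arg_minnP _ z (fun y => e x y && (f y < f x)) f.
  by rewrite xz.
move: (none p); rewrite xp px /= => /negbT/negP; apply.
by apply/forallP => y; apply/implyP; apply: pmin.
Qed.

Definition top := (\max_(y : T) pos y).+2.

Lemma pos_lt_top y : (pos y).+1 < top.
Proof. by rewrite !ltnS; apply: leq_bigmax. Qed.

Definition lnb := leftmost pos.
Definition rnb := leftmost (fun y => top - pos y).

Lemma lnbP x p : lnb x = Some p ->
  [/\ e x p, pos p < pos x & forall z, e x z -> pos z < pos x -> pos p <= pos z].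
Proof. by rewrite /lnb; case: leftmostP => // p' xp px pmin [<-]. Qed.

Lemma rnbP x v : rnb x = Some v ->
  [/\ e x v, pos x < pos v & forall z, e x z -> pos x < pos z -> pos z <= pos v].
Proof.
have := pos_lt_top x; rewrite /rnb; case: leftmostP => // v' xv vx vmax xtop [<-].
split=> // [|z xz zx]; first by have := pos_lt_top v'; lia.
by have := vmax z xz; have := pos_lt_top z; lia.
Qed.

Lemma lnb_of_left x z : e x z -> pos z < pos x -> exists2 p, lnb x = Some p & pos p <= pos z.
Proof.
rewrite /lnb; case: leftmostP => [p _ _ pmin | none] xz zx; first by exists p => //; apply: pmin.
by have := none z xz; lia.
Qed.

Lemma rnb_of_right x z : e x z -> pos x < pos z -> exists2 v, rnb x = Some v & pos z <= pos v.
Proof.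
have := pos_lt_top x; have := pos_lt_top z.
rewrite /rnb; case: leftmostP => [v _ _ vmax | none] ztop xtop xz xz'.
  by exists v => //; have := vmax z xz; have := pos_lt_top v; lia.
by have := none z xz; lia.
Qed.

Lemma left_or_right a b : e a b -> pos a < pos b -> lnb b = Some a \/ rnb a = Some b.
Proof.
move=> ab ab'; have [q bq qa] := lnb_of_left (edge_sym ab) ab'.
have [<- | nqa] := eqVneq q a; [by left | right].
have [v av bv] := rnb_of_right ab ab'.
have [-> // | nbv] := eqVneq b v.
have [bq' _ _] := lnbP bq; have [av' _ _] := rnbP av.
move: (neq_pos_lt nqa) (neq_pos_lt nbv) => qa' bv'.
by case: (no_cross (edge_sym bq') av'); split; lia.
Qed.

Definition anchor x := odflt x (lnb x).

Lemma anchor_lnb x p : lnb x = Some p -> anchor x = p.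
Proof. by rewrite /anchor => ->. Qed.

Lemma anchor_cases x : anchor x = x \/ lnb x = Some (anchor x).
Proof. by rewrite /anchor; case: (lnb x) => [p|]; [right | left]. Qed.

Lemma pos_anchor x : pos (anchor x) <= pos x.
Proof. by rewrite /anchor; case lx: (lnb x) => [p|] //=; case/lnbP: lx => _ /ltnW. Qed.

Lemma lnb_rnb x v q : rnb x = Some v -> lnb v = Some q -> q = x \/ pos q <= pos (anchor x).
Proof.
move=> xv vq; have [xv' xv'' _] := rnbP xv; have [vq' qv qmin] := lnbP vq.
have qx := qmin x (edge_sym xv') xv''.
have [<- | /neq_pos_lt nqx] := eqVneq q x; [by left | right].
rewrite /anchor; case lx: (lnb x) => [p|] /=; last lia.
have [xp px _] := lnbP lx; rewrite leqNgt; apply/negP => pq.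
by case: (no_cross (edge_sym xp) (edge_sym vq')); split; lia.
Qed.

Variant right_kind := Plain | Sib of T | Far of T.

Definition kind x : right_kind :=
  if rnb x is Some v then
    if lnb v == Some x then Plain else if lnb v == lnb x then Sib v else Far v
  else Plain.

Lemma kind_Plain x v : kind x = Plain -> rnb x = Some v -> lnb v = Some x.
Proof. by rewrite /kind => + xv; rewrite xv; case: eqP => // _; case: eqP. Qed.

Lemma kind_Sib x v : kind x = Sib v -> rnb x = Some v /\ lnb v = lnb x.
Proof.
rewrite /kind; case: (rnb x) => // v'; case: eqP => // _.
by case: eqP => // vx [<-]; split.
Qed.

Lemma kind_Far x v :
  kind x = Far v -> rnb x = Some v /\ exists2 q, lnb v = Some q & pos q < pos (anchor x).
Proof.
rewrite /kind; case xv: (rnb x) => [v'|] //.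
have [xv' xv'' _] := rnbP xv; have [q vq _] := lnb_of_left (edge_sym xv') xv''.
rewrite vq; case: eqP => // nqx; case: eqP => // nqp [<-]; split => //; exists q => //.
case: (lnb_rnb xv vq) => [qx|]; first by case: nqx; rewrite qx.
rewrite leq_eqVlt => /orP[/eqP/pos_inj qa|] //.
by case: (anchor_cases x) => [ax | lx]; [case: nqx | case: nqp]; rewrite qa ?ax ?lx.
Qed.

Lemma rnb_kind x : if kind x is (Sib v | Far v) then rnb x = Some v else True.
Proof. by case kx: (kind x) => [|v|v] //; [case/kind_Sib: kx | case/kind_Far: kx]. Qed.

Fixpoint depth_upto (n : nat) (x : T) : nat :=
  if n is n'.+1 then if lnb x is Some p then (depth_upto n' p).+1 else 0 else 0.

Lemma depth_upto_stable n m x : pos x < n -> pos x < m -> depth_upto n x = depth_upto m x.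
Proof.
elim: n m x => [|n IHn] [|m] x //= xn xm.
by case lx: (lnb x) => [p|] //; have [_ px _] := lnbP lx; rewrite (IHn m) //; lia.
Qed.

Definition colour x := odd (depth_upto top x).

Lemma colour_lnb x p : lnb x = Some p -> colour p = ~~ colour x.
Proof.
move=> lx; have [_ px _] := lnbP lx; have := pos_lt_top x; rewrite /colour.
have -> : depth_upto top x = (depth_upto top.-1 p).+1 by rewrite /top /= lx.
by rewrite oddS negbK => xtop; congr odd; apply: depth_upto_stable; lia.
Qed.

Definition lane x := (pos x).+1.

Lemma lane_inj : injective lane.
Proof. by move=> x y [/pos_inj]. Qed.

Definition own_end x :=
  if kind x is Far v then (if colour v == colour x then top else lane v) else top.

Definition anchor_end x :=
  match kind x with
  | Plain => (lane x).+1
  | Sib v => (lane v).+1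
  | Far v => if colour v == colour x then lane v else (lane x).+1
  end.

Definition far_base x :=
  if kind x is Far v then (if colour v == colour x then anchor x else x) else x.

(* The anchor of a root is the root itself: nobody else uses its lane in the
   orientation [~~ colour x]. *)
Definition occupies x (s : slot) : bool :=
  [|| in_seg (colour x) (lane x) (lane (anchor x)) (own_end x) s,
      in_seg (~~ colour x) (lane (anchor x)) (lane x) (anchor_end x) s
    | if kind x is Far v then
        in_seg (colour v) (lane v) (pos (far_base x)) (lane (far_base x)) s
      else false].

Definition shape x : zigzag :=
  if kind x is Far v then
    if colour v == colour x then
      Zigzag (colour x) (lane v) (lane (anchor x)) (lane x) (pos (anchor x)) top
    else Zigzag (~~ colour x) (lane v) (lane x) (lane (anchor x)) (pos x) (lane x).+1
  else Zigzag (~~ colour x) top (lane x) (lane (anchor x)) (lane x) (anchor_end x).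

Lemma zslots_shape x : zslots (shape x) =1 occupies x.
Proof.
case=> o l k; rewrite /zslots /occupies /shape /own_end /anchor_end /far_base /in_seg /=.
by case: (kind x) => [|v|v]; try case: (colour v); case: (colour x); case: o => /=; lia.
Qed.

Lemma shape_wf x : zigzag_wf top (shape x).
Proof.
have := pos_lt_top x; have := pos_lt_top (anchor x); have := pos_anchor x.
rewrite /zigzag_wf /shape /anchor_end /lane.
by case: (kind x) (rnb_kind x) => [|v|v] /=; [lia | |]; move/rnbP => [_ xv _];
  have := pos_lt_top v; try case: (colour v == colour x) => /=; lia.
Qed.

Lemma lane_lt_anchor_end x : lane x < anchor_end x.
Proof.
rewrite /anchor_end /lane; case: (kind x) (rnb_kind x) => [|v|v] // /rnbP[_ xv _];
  try case: (colour v == colour x); lia.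
Qed.

Lemma lane_lt_own_end x : lane x < own_end x.
Proof.
have := pos_lt_top x; rewrite /own_end /lane; case: (kind x) (rnb_kind x) => [|v|v] //.
by move/rnbP => [_ xv _]; case: (colour v == colour x); lia.
Qed.

Lemma child_lt_own_end a b : lnb b = Some a -> lane b < own_end a.
Proof.
move=> ba; have := pos_lt_top b; rewrite /own_end; case ka: (kind a) => [|v|v] //.
case: (colour v == colour a) => // _; have [av [q vq qa]] := kind_Far ka.
have [ba' ab _] := lnbP ba; have [_ _ vmax] := rnbP av.
have := vmax b (edge_sym ba') ab; rewrite /lane leq_eqVlt => /orP[/eqP/pos_inj bv | //].
by move: vq qa; rewrite -bv ba => -[<-]; have := pos_anchor a; lia.
Qed.

Lemma pos_far_base x : pos (anchor x) <= pos (far_base x) <= pos x.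
Proof.
have := pos_anchor x; rewrite /far_base.
by case: (kind x) => [| v | v]; try case: (colour v == colour x); lia.
Qed.

Lemma far_base_cases x : far_base x = x \/ lnb x = Some (far_base x).
Proof.
rewrite /far_base; case: (kind x) => [| v | v]; try case: (colour v == colour x);
  by [left | exact: anchor_cases].
Qed.

Lemma occupies_own x k :
  lane (anchor x) <= k -> k < own_end x -> occupies x (Slot (colour x) (lane x) k).
Proof. by move=> lo hi; rewrite /occupies /in_seg /= !eqxx lo hi. Qed.

Lemma occupies_anchor x k :
  lane x <= k -> k < anchor_end x -> occupies x (Slot (~~ colour x) (lane (anchor x)) k).
Proof. by move=> lo hi; rewrite /occupies /in_seg /= !eqxx lo hi orbT. Qed.

Lemma occupies_far x v :
  kind x = Far v -> occupies x (Slot (colour v) (lane v) (pos (far_base x))).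
Proof. by move=> kx; rewrite /occupies kx /in_seg /= !eqxx leqnn ltnSn !orbT. Qed.

Lemma child_occupies a b : lnb b = Some a -> exists s, occupies a s && occupies b s.
Proof.
move=> ba; have [_ ab _] := lnbP ba.
exists (Slot (colour a) (lane a) (lane b)); apply/andP; split.
  by apply: occupies_own (child_lt_own_end ba); have := pos_anchor a; rewrite /lane; lia.
by rewrite (colour_lnb ba) -(anchor_lnb ba); apply: occupies_anchor (lane_lt_anchor_end b).
Qed.

Lemma adj_occupies a b : e a b -> pos a < pos b -> exists s, occupies a s && occupies b s.
Proof.
move=> ab ab'; case: (left_or_right ab ab') => [ba | av]; first exact: child_occupies.
have [q bq qa] := lnb_of_left (edge_sym ab) ab'.
case ka: (kind a) => [|v|v]; first exact/child_occupies/(kind_Plain ka).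
  have [av' ba] := kind_Sib ka; move: av' ka ba; rewrite av => -[<-] ka ba.
  move: (bq); rewrite ba => aq.
  have col_ab : colour a = colour b.
    by apply: negb_inj; rewrite -(colour_lnb aq) -(colour_lnb bq).
  exists (Slot (~~ colour a) (lane (anchor a)) (lane b)); apply/andP; split.
    by apply: occupies_anchor; rewrite /anchor_end ?ka /lane //; lia.
  rewrite col_ab (anchor_lnb aq) -(anchor_lnb bq).
  exact: occupies_anchor (lane_lt_anchor_end b).
have [av' [q' bq' q'a]] := kind_Far ka; move: av' ka bq' q'a; rewrite av => -[<-] ka.
rewrite bq => -[<-] {}qa.
exists (Slot (colour b) (lane b) (pos (far_base a))); rewrite occupies_far //=.
apply: occupies_own; have := lane_lt_own_end b; have := pos_far_base a;
  rewrite ?(anchor_lnb bq) /lane; lia.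
Qed.

Lemma occupiesP x o l k : occupies x (Slot o l k) ->
  [\/ [/\ o = colour x & l = lane x],
      [/\ o = ~~ colour x, l = lane (anchor x), lane x <= k & k < anchor_end x]
    | exists2 v, kind x = Far v & [/\ o = colour v, l = lane v & k = pos (far_base x)]].
Proof.
rewrite /occupies /in_seg /=.
case/or3P => [/and4P[/eqP-> /eqP-> _ _] | /and4P[/eqP-> /eqP-> lo hi] |].
- by constructor 1.
- by constructor 2.
case: (kind x) => [|v|v] // /and4P[/eqP-> /eqP-> lo hi]; constructor 3; exists v => //.
by split => //; rewrite /lane /= in lo hi *; lia.
Qed.

Lemma anchor_adj u w : u != w -> anchor w = u -> e u w.
Proof.
move=> nuw; case: (anchor_cases w) => [-> wu | + wu]; first by rewrite wu eqxx in nuw.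
by rewrite wu => /lnbP[/edge_sym].
Qed.

Lemma far_adj u w : kind w = Far u -> e u w.
Proof. by case/kind_Far => /rnbP[/edge_sym]. Qed.

Lemma sibling_adj u w z : lnb u = Some z -> lnb w = Some z -> pos u < pos w ->
  lane w < anchor_end u -> e u w.
Proof.
move=> uz wz uw; have [_ zu _] := lnbP uz; have [zw _ _] := lnbP wz.
have next_adj v : rnb u = Some v -> pos w <= pos v -> e u w.
  move=> uv; have [uv' _ _] := rnbP uv; rewrite leq_eqVlt => /orP[/eqP/pos_inj -> // | wv].
  by case: (no_cross (edge_sym zw) uv'); split; lia.
rewrite /anchor_end; case ku: (kind u) => [|v|v]; rewrite /lane; first lia.
  by have [uv _] := kind_Sib ku; move/ltnSE; apply: next_adj.
have [uv _] := kind_Far ku; case: (colour v == colour u); last lia.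
by move/ltnW; apply: next_adj.
Qed.

Lemma anchor_sibling_adj u w k : u != w -> anchor u = anchor w -> colour u = colour w ->
  lane u <= k < anchor_end u -> lane w <= k < anchor_end w -> e u w.
Proof.
move=> nuw; case: (anchor_cases u) (anchor_cases w) => [au | lu] [aw | lw] auw cuw.
- by rewrite -au -aw auw eqxx in nuw.
- by move: (colour_lnb lw); rewrite -auw au cuw; case: (colour w).
- by move: (colour_lnb lu); rewrite auw aw cuw; case: (colour w).
rewrite auw in lu; case/orP: (neq_pos_lt nuw) => [uw | wu].
  by move=> /andP[_ ?] /andP[? _]; apply: sibling_adj lu lw uw _; lia.
by move=> /andP[? _] /andP[_ ?]; rewrite e_sym; apply: sibling_adj lw lu wu _; lia.
Qed.

Lemma far_base_adj u w v : u != w -> kind u = Far v -> kind w = Far v ->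
  far_base u = far_base w -> e u w.
Proof.
move=> nuw ku kw; have [uv _] := kind_Far ku; have [wv _] := kind_Far kw.
have [uv' _ _] := rnbP uv; have [wv' _ _] := rnbP wv.
case: (far_base_cases u) (far_base_cases w) => [-> | lu] [-> | lw] buw.
- by rewrite buw eqxx in nuw.
- by rewrite -buw in lw; have [/edge_sym] := lnbP lw.
- by rewrite buw in lu; have [] := lnbP lu.
rewrite buw in lu; have [pu pu' _] := lnbP lu; have [pw pw' _] := lnbP lw.
have [_ uv'' _] := rnbP uv; have [_ wv'' _] := rnbP wv.
case/orP: (neq_pos_lt nuw) => [uw | wu].
  by case: (no_cross (edge_sym pw) uv'); split; lia.
by case: (no_cross (edge_sym pu) wv'); split; lia.
Qed.

Lemma occupies_adj u w s : u != w -> occupies u s -> occupies w s -> e u w.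
Proof.
have anchor_far_contra x y v : kind y = Far v -> anchor x = v ->
    lane x <= pos (far_base y) -> False.
  move=> ky xv xk; have [/rnbP[_ yv _] _] := kind_Far ky.
  by have := pos_far_base y; have := pos_anchor x; rewrite xv /lane in xk *; lia.
case: s => o l k nuw /occupiesP[[-> ->] | [-> -> uk ku] | [v ku [-> -> ->]]]
  /occupiesP[[cw /lane_inj uw] | [cw /lane_inj uw wk kw] | [v' kw [cw /lane_inj uw kw']]].
- by rewrite uw eqxx in nuw.
- exact: anchor_adj.
- by apply: far_adj; rewrite uw.
- by rewrite e_sym; apply: anchor_adj; rewrite 1?eq_sym.
- by apply: (anchor_sibling_adj (k := k) nuw uw (negb_inj cw)); apply/andP.
- by case: (anchor_far_contra _ _ _ kw uw); rewrite -kw'.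
- by rewrite e_sym; apply: far_adj; rewrite -uw.
- by case: (anchor_far_contra _ _ _ ku (esym uw)).
- move: kw; rewrite -uw => kw; apply: far_base_adj nuw ku kw _.
  by apply: lane_inj; rewrite /lane kw'.
Qed.

Lemma adj_iff_occupies u w : u != w -> e u w <-> exists s, occupies u s && occupies w s.
Proof.
move=> nuw; split => [uw | [s /andP[]]]; last exact: occupies_adj.
case/orP: (neq_pos_lt nuw) => [lt | lt]; first exact: adj_occupies.
by have [s /andP[ws us]] := adj_occupies (edge_sym uw) lt; exists s; rewrite us ws.
Qed.

Definition vertex_path x := zpath top (shape x).

Lemma vertex_path_EPG : EPG_rep e vertex_path.
Proof.
split=> [x | u w nuw]; first exact/zpath_grid_path/shape_wf.
rewrite share_edge_zpath ?shape_wf // adj_iff_occupies //.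
by split=> -[s ss]; exists s; rewrite !zslots_shape in ss *.
Qed.

End Outerplanar.

Theorem theorem2p7 (T : finType) (e : rel T) :
  symmetric e -> irreflexive e -> outerplanar e -> in_Bkm 2 e.
Proof.
move=> e_sym _ [pos [pos_inj no_cross]].
exists (vertex_path e pos); split; first exact: vertex_path_EPG.
by split=> x; [apply: zpath_bends | apply: zpath_monotonic].
Qed.
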